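(* Fix a constant $r$. There is a constant $c_r$ such that for every unweighted $K_r$-minor-free graph $G$ and every BFS forest $F\subseteq G$, there is a root expansion of $F$ of size at most $c_r$.
   Context: $G$ is unweighted (edge lengths 1); $K_r$-minor-free means $G$ has no $K_r$ minor. For $S\subseteq V(G)$, $G[S]$ is the induced subgraph. A tree $T\subseteq G$ rooted at $r$ is a BFS tree if $\mathrm{dist}_T(r,v)=\mathrm{dist}_{G[V(T)]}(r,v)$ for all $v\in V(T)$. A BFS forest is a subgraph of $G$ that is a disjoint union of vertex-disjoint BFS trees. A BFS tree $T$ with root $r$ preserves a path $\pi$ in $G$ if every vertex of $\pi$ is in $V(T)$ and $\pi$ passes through $r$; a set of BFS trees (or forests) preserves $\pi$ if one of its trees preserves $\pi$. The prefix of a path $\pi$ is the path consisting of all but the last edge of $\pi$. A root expansion of a BFS tree $T$ is a set $\mathcal{T}$ of BFS trees such that every path $\pi$ in $G$ whose prefix is preserved by $T$ is preserved by $\mathcal{T}$. A root expansion of a BFS forest $F$ is a set $\mathcal{F}$ of BFS forests (each consisting of vertex-disjoint BFS trees; trees in different forests may share vertices) such that the set of all trees appearing in forests of $\mathcal{F}$ is a root expansion of each tree of $F$. The size of the root expansion is $|\mathcal{F}|$. *)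

(* finite simple graphs as symmetric irreflexive relations on a finType. *)
From Stdlib Require List.
From mathcomp Require Import all_boot.
Set Implicit Arguments. Unset Strict Implicit. Unset Printing Implicit Defensive.

Section Graphs.
Variable T : finType.

Definition induced (e : rel T) (S : {set T}) : rel T :=
  [rel x y | [&& e x y, x \in S & y \in S]].

Definition has_K_minor (e : rel T) (r : nat) : Prop :=
  exists B : 'I_r -> {set T},
    [/\ (forall i, B i != set0),
        (forall i x y, x \in B i -> y \in B i -> connect (induced e (B i)) x y),
        (forall i j, i != j -> [disjoint B i & B j]) &
        (forall i j, i != j -> exists x y, [/\ x \in B i, y \in B j & e x y])].

Fixpoint nwalk (E : rel T) (n : nat) (x y : T) : bool :=
  match n with
  | 0 => x == y
  | n'.+1 => [exists z, E x z && nwalk E n' z y]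
  end.

(* (unweighted) distance: least n with an n-edge walk; #|T| if unreachable *)
Definition dist (E : rel T) (x y : T) : nat :=
  find (fun n => nwalk E n x y) (iota 0 #|T|).

Record rtree := RTree { tV : {set T}; tE : rel T; troot : T }.

Definition is_tree (e : rel T) (t : rtree) : Prop :=
  [/\ (forall x y, tE t x y -> [&& e x y, x \in tV t & y \in tV t]),
      (forall x y, tE t x y = tE t y x),
      troot t \in tV t,
      (forall x y, x \in tV t -> y \in tV t -> connect (tE t) x y) &
      (forall c : seq T, uniq c -> 2 < size c -> ~~ cycle (tE t) c)].

Definition is_bfs_tree (e : rel T) (t : rtree) : Prop :=
  is_tree e t /\
  forall v, v \in tV t ->
    dist (tE t) (troot t) v = dist (induced e (tV t)) (troot t) v.

Definition is_bfs_forest (e : rel T) (F : seq rtree) : Prop :=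
  (forall t, List.In t F -> is_bfs_tree e t) /\
  pairwise (fun t1 t2 => [disjoint tV t1 & tV t2]) F.

Definition gpath (e : rel T) (p : seq T) : bool :=
  if p is x :: q then path e x q && uniq p else false.

(* prefix: all but the last edge (drop the last vertex) *)
Definition prefix (p : seq T) : seq T :=
  if p is x :: q then belast x q else [::].

Definition preserves (t : rtree) (p : seq T) : bool :=
  all (fun v => v \in tV t) p && (troot t \in p).

Definition preserved_by (ts : seq rtree) (p : seq T) : Prop :=
  exists t, List.In t ts /\ preserves t p.

Definition root_expansion_tree (e : rel T) (t : rtree) (ts : seq rtree) : Prop :=
  (forall t', List.In t' ts -> is_bfs_tree e t') /\
  forall p, gpath e p -> preserves t (prefix p) -> preserved_by ts p.

Definition root_expansion_forest (e : rel T) (F : seq rtree) (FF : seq (seq rtree)) : Prop :=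
  (forall F', List.In F' FF -> is_bfs_forest e F') /\
  forall t, List.In t F -> root_expansion_tree e t (flatten FF).

End Graphs.

From Pilot Require Import Defs.
From Stdlib Require List.
From mathcomp Require Import all_boot zify.
Set Implicit Arguments. Unset Strict Implicit. Unset Printing Implicit Defensive.

(* Contracting each tree of [F] to its root yields a minor [H] of [G], so [H] is
   [K_r]-minor-free and hence [2 ^ r]-degenerate (a Mader-type density bound): it has a
   proper colouring with [D = 2 ^ r] colours.  For each colour [a], the bipartite graph
   between the contracted trees of colour [a] and the vertices of [G] outside them is
   again a minor of [G], so it has an orientation with out-degrees below [D].  Indexing
   the out-arcs of each vertex by [0 .. D-1], the arcs of a fixed index form
   vertex-disjoint stars; uncontracting a star gives a connected set, hence a BFS tree
   rooted at its centre.  These [2 D^2] star forests, together with [F], form the root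
   expansion: a path leaving a tree [t] of [F] by the edge [uv] uses an arc between
   [troot t] and [v], and the star containing that arc gives a tree spanning [t] and [v]
   rooted at [troot t] or at [v]. *)

Section Distance.
Variable T : finType.
Implicit Types (E : rel T) (x y z : T).

Lemma nwalk_rcons E n x y z : nwalk E n x y -> E y z -> nwalk E n.+1 x z.
Proof.
elim: n x => [|n IHn] x /=.
  by move=> /eqP -> Eyz; apply/existsP; exists z; rewrite Eyz eqxx.
move=> /existsP[w /andP[Exw Hw]] Eyz; apply/existsP; exists w.
by rewrite Exw; apply: IHn Hw Eyz.
Qed.

Lemma nwalk_sym E n x y : symmetric E -> nwalk E n x y -> nwalk E n y x.
Proof.
move=> symE; elim: n x y => [|n IHn] x y /=; first by rewrite eq_sym.
move=> /existsP[w /andP[Exw Hw]].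
by apply: nwalk_rcons (IHn _ _ Hw) _; rewrite symE.
Qed.

Lemma sub_nwalk E E' n x y : subrel E E' -> nwalk E n x y -> nwalk E' n x y.
Proof.
move=> sEE'; elim: n x => [|n IHn] x //= /existsP[w /andP[Exw Hw]].
by apply/existsP; exists w; rewrite (sEE' _ _ Exw) (IHn _ Hw).
Qed.

Lemma nwalk_connect E n x y : nwalk E n x y -> connect E x y.
Proof.
elim: n x => [|n IHn] x /=; first by move=> /eqP ->.
by move=> /existsP[w /andP[Exw /IHn]]; apply: connect_trans (connect1 Exw).
Qed.

Lemma path_nwalk E x p : path E x p -> nwalk E (size p) x (last x p).
Proof.
elim: p x => [|w p IHp] x //= /andP[Exw Hp].
by apply/existsP; exists w; rewrite Exw IHp.
Qed.

Lemma dist_leq_nwalk E n x y : nwalk E n x y -> dist E x y <= n.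
Proof.
move=> Hn; rewrite /dist; case: (ltnP n #|T|) => ltnT.
  rewrite leqNgt; apply/negP => /(before_find 0).
  by rewrite nth_iota // add0n Hn.
by apply: leq_trans (find_size _ _) _; rewrite size_iota.
Qed.

(* [dist] defaults to [#|T|] when there is no walk of fewer than [#|T|] edges. *)
Lemma dist_nwalk E x y : dist E x y < #|T| -> nwalk E (dist E x y) x y.
Proof.
rewrite /dist => ltdT.
have Hhas : has (fun n => nwalk E n x y) (iota 0 #|T|) by rewrite has_find size_iota.
by have := nth_find 0 Hhas; rewrite nth_iota // add0n.
Qed.

Lemma connect_dist_lt E x y : connect E x y -> dist E x y < #|T|.
Proof.
move=> /connectP[p Hp ->]; case: (shortenP Hp) => q Hq uniq_q _.
apply: leq_ltn_trans (dist_leq_nwalk (path_nwalk Hq)) _.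
by have := max_card (mem (x :: q)); rewrite (card_uniqP uniq_q).
Qed.

Lemma dist_sub E E' x y : subrel E E' -> dist E' x y <= dist E x y.
Proof.
move=> sEE'; case: (ltnP (dist E x y) #|T|) => [ltdT | leTd].
  exact/dist_leq_nwalk/(sub_nwalk sEE')/dist_nwalk.
apply: leq_trans leTd; rewrite /dist.
by apply: leq_trans (find_size _ _) _; rewrite size_iota.
Qed.

Lemma induced_sym E S : symmetric E -> symmetric (induced E S).
Proof. by move=> symE x y; rewrite /induced /= symE [(x \in S) && _]andbC. Qed.

End Distance.

Section BFSTree.
Variables (T : finType) (e : rel T) (W : {set T}) (rho : T).
Hypotheses (sym_e : symmetric e) (rho_W : rho \in W).
Hypothesis connect_W : forall x y, x \in W -> y \in W -> connect (induced e W) x y.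

Local Notation d u := (dist (induced e W) rho u).

(* The default [u] is only reached at the root. *)
Definition bfs_parent u :=
  odflt u [pick z | e u z && (z \in W) && ((d z).+1 == d u)].

Definition bfs_edge : rel T := fun x y => (x \in W) && (y \in W) &&
  ((x != rho) && (bfs_parent x == y) || (y != rho) && (bfs_parent y == x)).

Definition bfs_tree := RTree W bfs_edge rho.

Lemma bfs_dist_lt u : u \in W -> d u < #|T|.
Proof. by move=> uW; apply/connect_dist_lt/connect_W. Qed.

Lemma bfs_parentP u : u \in W -> u != rho ->
  [/\ e u (bfs_parent u), bfs_parent u \in W & (d (bfs_parent u)).+1 = d u].
Proof.
move=> uW nurho; have symI := induced_sym W sym_e.
rewrite /bfs_parent; case: pickP => [z /andP[/andP[-> ->] /eqP ->] // | none].
have := nwalk_sym symI (dist_nwalk (bfs_dist_lt uW)); have := bfs_dist_lt uW.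
case Hd: (d u) => [|n] ltdT /=; first by move/eqP => urho; rewrite urho eqxx in nurho.
move=> /existsP[z /andP[Iuz /(nwalk_sym symI) Hz]].
move: (Iuz); rewrite /induced /= => /and3P[euz _ zW].
have dz : d z <= n := dist_leq_nwalk Hz.
have du : d u <= (d z).+1.
  apply/dist_leq_nwalk/(nwalk_rcons _ (_ : induced e W z u)); last by rewrite symI.
  by apply/dist_nwalk; apply: leq_ltn_trans dz (ltnW ltdT).
move: du (none z); rewrite euz zW Hd ltnS /= eqSS => du.
by rewrite eqn_leq dz du.
Qed.

Lemma bfs_edge_sub x y : bfs_edge x y -> [&& e x y, x \in W & y \in W].
Proof.
rewrite /bfs_edge => /andP[/andP[xW yW] /orP[/andP[nx /eqP <-]|/andP[ny /eqP <-]]].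
  by case: (bfs_parentP xW nx) => -> -> _; rewrite xW.
by case: (bfs_parentP yW ny) => eyp -> _; rewrite sym_e eyp yW.
Qed.

Lemma bfs_edge_sym : symmetric bfs_edge.
Proof. by move=> x y; rewrite /bfs_edge [(x \in W) && _]andbC orbC. Qed.

Lemma bfs_edge_parent u : u \in W -> u != rho -> bfs_edge u (bfs_parent u).
Proof.
move=> uW nurho; case: (bfs_parentP uW nurho) => _ pW _.
by rewrite /bfs_edge uW pW nurho eqxx.
Qed.

Lemma bfs_nwalk u : u \in W -> nwalk bfs_edge (d u) rho u.
Proof.
have [n] := ubnP (d u); elim: n u => [//|n IHn] u lt_un uW.
case: (eqVneq u rho) => [-> | nurho].
  have d0 : d rho <= 0 by apply: (@dist_leq_nwalk _ _ 0); rewrite /= eqxx.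
  by move: d0; rewrite leqn0 => /eqP -> /=.
case: (bfs_parentP uW nurho) => _ pW dp.
rewrite -dp; apply: nwalk_rcons (IHn _ _ pW) _; first by rewrite -ltnS dp.
by rewrite bfs_edge_sym bfs_edge_parent.
Qed.

Lemma bfs_edge_down x w : bfs_edge x w -> d w <= d x -> (x != rho) && (bfs_parent x == w).
Proof.
move=> exw dwx; move: (exw); rewrite /bfs_edge.
move=> /andP[/andP[xW wW] /orP[//|/andP[nwrho /eqP pw]]].
by case: (bfs_parentP wW nwrho) => _ _; rewrite pw => dxw; rewrite -dxw ltnn in dwx.
Qed.

(* The farthest vertex of a cycle would need two distinct parents. *)
Lemma bfs_edge_acyclic (c : seq T) : uniq c -> 2 < size c -> ~~ cycle bfs_edge c.
Proof.
move=> uniq_c size_c; apply/negP => cycle_c.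
have c0 : head rho c \in c by case: c size_c {uniq_c cycle_c} => // ? ? _; exact: mem_head.
case: (@arg_maxnP _ _ (mem c) (fun u => d u) c0) => x xc maxx.
case: (rot_to xc) => i q rot_c.
have : cycle bfs_edge (x :: q) by rewrite -rot_c rot_cycle.
have : uniq (x :: q) by rewrite -rot_c rot_uniq.
have : size (x :: q) = size c by rewrite -rot_c size_rot.
have qc y : y \in q -> y \in c by move=> yq; rewrite -(mem_rot i) rot_c inE yq orbT.
case: q rot_c qc => [|a [|b q]] _ qc; try by move=> /= size_c'; rewrite -size_c' in size_c.
rewrite /= rcons_path => _ /and4P[_ naq _ _] /and4P[exa _ _ elx].
set l := last b q in elx.
have lbq : l \in b :: q by apply: mem_last.
have lc : l \in c by apply: qc; rewrite inE lbq orbT.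
have /andP[_ /eqP pa] := bfs_edge_down exa (maxx a (qc a (mem_head _ _))).
rewrite bfs_edge_sym in elx.
have /andP[_ /eqP pl] := bfs_edge_down elx (maxx l lc).
by move: naq; rewrite -pa pl lbq.
Qed.

Lemma bfs_tree_is_bfs : is_bfs_tree e bfs_tree.
Proof.
have connect_rho u : u \in W -> connect bfs_edge rho u.
  by move=> /bfs_nwalk /nwalk_connect.
split.
  split => //=; [exact: bfs_edge_sub | exact: bfs_edge_sym | | exact: bfs_edge_acyclic].
  move=> x y xW yW; apply: connect_trans (connect_rho _ yW).
  by rewrite (sym_connect_sym bfs_edge_sym); apply: connect_rho.
move=> v /= vW; apply/eqP; rewrite eqn_leq (dist_leq_nwalk (bfs_nwalk vW)) /=.
by apply: dist_sub => x y /bfs_edge_sub.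
Qed.

End BFSTree.

Section Minors.
Variable T : finType.
Implicit Types (S : {set T}) (E : rel T).

Definition minor_in S E k : Prop :=
  exists B : 'I_k -> {set T},
    [/\ (forall i, B i \subset S), (forall i, B i != set0),
        (forall i x y, x \in B i -> y \in B i -> connect (induced E (B i)) x y),
        (forall i j, i != j -> [disjoint B i & B j]) &
        (forall i j, i != j -> exists x y, [/\ x \in B i, y \in B j & E x y])].

Lemma minor_in_has_K_minor S E k : minor_in S E k -> has_K_minor E k.
Proof. by move=> [B [_ B0 Bc Bd Be]]; exists B. Qed.

Lemma minor_in_subset S S' E k : S' \subset S -> minor_in S' E k -> minor_in S E k.
Proof. by move=> sS'S [B [BS' B0 Bc Bd Be]]; exists B; split => // i; apply: subset_trans sS'S. Qed.

Lemma connect_induced_subset E (A B : {set T}) x y :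
  A \subset B -> connect (induced E A) x y -> connect (induced E B) x y.
Proof.
move=> sAB; apply: connect_sub => a b /and3P[Eab aA bA]; apply: connect1.
by rewrite /induced /= Eab (subsetP sAB _ aA) (subsetP sAB _ bA).
Qed.

Section BranchSets.
Variables (S1 S2 : {set T}) (E1 E2 : rel T) (beta : T -> {set T}).
Hypothesis beta_sub : forall u, u \in S2 -> beta u \subset S1.
Hypothesis beta_connect : forall u a b, u \in S2 -> a \in beta u -> b \in beta u ->
  connect (induced E1 (beta u)) a b.
Hypothesis beta_edge : forall u w, u \in S2 -> w \in S2 -> E2 u w ->
  exists a b, [/\ a \in beta u, b \in beta w & E1 a b].

Lemma connect_bigcup_branch (C : {set T}) : C \subset S2 ->
    (forall u w, u \in C -> w \in C -> connect (induced E2 C) u w) ->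
  forall a b, a \in \bigcup_(u in C) beta u -> b \in \bigcup_(u in C) beta u ->
  connect (induced E1 (\bigcup_(u in C) beta u)) a b.
Proof.
move=> sCS2 connectC a b /bigcupP[u uC au] /bigcupP[w wC bw].
have beta_cup v : v \in C -> beta v \subset \bigcup_(u in C) beta u.
  by move=> vC; apply/subsetP => z zv; apply/bigcupP; exists v.
have [p] := connectP (connectC _ _ uC wC).
elim: p u uC a au => [|v p IHp] u uC a au /=.
  move=> _ wu; rewrite wu in bw.
  by apply: connect_induced_subset (beta_cup _ uC) (beta_connect (subsetP sCS2 _ uC) au bw).
move=> /andP[/and3P[E2uv _ vC] pv] wp; have uS2 := subsetP sCS2 _ uC.
have [a1 [b1 [a1u b1v E1ab]]] := beta_edge uS2 (subsetP sCS2 _ vC) E2uv.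
apply: connect_trans (connect_induced_subset (beta_cup _ uC) (beta_connect uS2 au a1u)) _.
apply: connect_trans (IHp _ vC _ b1v pv wp); apply: connect1.
by rewrite /induced /= E1ab (subsetP (beta_cup _ uC) _ a1u) (subsetP (beta_cup _ vC) _ b1v).
Qed.

Hypothesis beta_neq0 : forall u, u \in S2 -> beta u != set0.
Hypothesis beta_disjoint : forall u w, u \in S2 -> w \in S2 -> u != w ->
  [disjoint beta u & beta w].

Lemma minor_in_branch k : minor_in S2 E2 k -> minor_in S1 E1 k.
Proof.
move=> [B [BS2 B0 Bc Bd Be]]; exists (fun i => \bigcup_(u in B i) beta u); split.
- move=> i; apply/bigcupsP => u uB; exact: beta_sub (subsetP (BS2 i) _ uB).
- move=> i; have /set0Pn[u uB] := B0 i.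
  have /set0Pn[x xu] := beta_neq0 (subsetP (BS2 i) _ uB).
  by apply/set0Pn; exists x; apply/bigcupP; exists u.
- by move=> i; apply: connect_bigcup_branch => //; exact: Bc.
- move=> i j nij; rewrite -setI_eq0; apply/eqP/setP => x; rewrite inE in_set0.
  apply/negP => /andP[/bigcupP[u uB xu] /bigcupP[w wB xw]].
  have nuw : u != w.
    apply: contraTneq (Bd i j nij) => uw; rewrite -uw in wB.
    by apply/pred0Pn; exists u; rewrite /= uB wB.
  have := beta_disjoint (subsetP (BS2 i) _ uB) (subsetP (BS2 j) _ wB) nuw.
  by move=> /pred0P/(_ x); rewrite /= xu xw.
- move=> i j nij; have [x [y [xB yB Exy]]] := Be i j nij.
  have [a [b [au bw Eab]]] := beta_edge (subsetP (BS2 i) _ xB) (subsetP (BS2 j) _ yB) Exy.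
  by exists a, b; split => //; apply/bigcupP; [exists x | exists y].
Qed.

End BranchSets.

Lemma minor_in_cone S (N : {set T}) E k x : symmetric E -> N \subset S -> x \in S ->
  x \notin N -> (forall z, z \in N -> E x z) -> minor_in N E k -> minor_in S E k.+1.
Proof.
move=> symE sNS xS xN Ex [B [BN B0 Bc Bd Be]].
pose B' (i : 'I_k.+1) := if unlift ord_max i is Some j then B j else [set x].
have xB j : x \notin B j by apply: contra xN; apply: subsetP (BN j) x.
have Ex_B j z : z \in B j -> E x z by move=> zB; apply/Ex/(subsetP (BN j)).
exists B'; split; rewrite /B'.
- move=> i; case: unliftP => [j _|_]; [exact: subset_trans (BN j) sNS | by rewrite sub1set].
- by move=> i; case: unliftP => [j _|_]; [exact: B0 | apply/set0Pn; exists x; rewrite inE].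
- move=> i a b; case: unliftP => [j _|_]; first exact: Bc.
  by rewrite !inE => /eqP -> /eqP ->; exact: connect0.
- move=> i i' nii'; case: unliftP => [j ii|ii]; case: unliftP => [j' ii'|ii'].
  + by apply: Bd; apply: contraNneq nii' => jj'; rewrite ii ii' jj'.
  + by rewrite disjoint_sym disjoints1.
  + by rewrite disjoints1.
  + by rewrite ii ii' eqxx in nii'.
- move=> i i' nii'; case: unliftP => [j ii|ii]; case: unliftP => [j' ii'|ii'].
  + by apply: Be; apply: contraNneq nii' => jj'; rewrite ii ii' jj'.
  + have /set0Pn[z zB] := B0 j; exists z, x.
    by rewrite inE eqxx symE (Ex_B j z zB).
  + have /set0Pn[z zB] := B0 j'; exists x, z.
    by rewrite inE eqxx (Ex_B j' z zB).
  + by rewrite ii ii' eqxx in nii'.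
Qed.

End Minors.

Section Density.
Variable T : finType.
Implicit Types (S : {set T}) (E : rel T).

Definition deg S E x := #|[set y in S | E x y]|.
Definition degsum S E := \sum_(x in S) deg S E x.
Definition arcs S E := [set p : T * T | [&& p.1 \in S, p.2 \in S & E p.1 p.2]].

Lemma degsum_arcs S E : degsum S E = #|arcs S E|.
Proof.
rewrite /degsum (eq_bigr (fun x => \sum_(y | (y \in S) && E x y) 1)); last first.
  by move=> x _; rewrite sum1dep_card.
rewrite pair_big_dep sum1dep_card; apply: eq_card => -[a b].
by rewrite !inE /= andbA.
Qed.

(* The contraction of the edge [xy] into [x], as a graph on [S :\ y]. *)
Definition contract E x y : rel T := fun u w =>
  (u != w) && [|| E u w, (u == x) && E y w | (w == x) && E u y].

Lemma contract_sym E x y : symmetric E -> symmetric (contract E x y).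
Proof.
move=> symE u w; rewrite /contract eq_sym (symE u w) (symE y w) (symE u y).
by case: (E w u); case: (u == x); case: (w == x); case: (E w y); case: (E y u).
Qed.

Lemma contract_irr E x y : irreflexive (contract E x y).
Proof. by move=> u; rewrite /contract eqxx. Qed.

Definition common_nbrs S E x y := [set z in S | E x z && E y z].

Section Contraction.
Variables (S : {set T}) (E : rel T) (x y : T).
Hypotheses (symE : symmetric E) (irrE : irreflexive E) (xS : x \in S) (yS : y \in S)
  (Exy : E x y).

Let C := common_nbrs S E x y.
(* Contraction loses at most the arcs in [lost]; on the other arcs [merge] is injective. *)
Let lost := [set (x, y); (y, x)] :|: [set (y, w) | w in C] :|: [set (w, y) | w in C].
Let merge z := if z == y then x else z.
Let kept := arcs S E :\: lost.

Lemma kept_swap a b : (a, b) \in kept -> (b, a) \in kept.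
Proof.
rewrite !inE /= => /andP[lost_ab /and3P[aS bS Eab]]; rewrite aS bS symE Eab !andbT.
apply: contra lost_ab; rewrite !xpair_eqE.
move=> /orP[/orP[/orP[/andP[/eqP-> /eqP->]|/andP[/eqP-> /eqP->]]|]|];
  rewrite ?eqxx ?orbT //.
- by move=> /imsetP[w wC [-> ->]]; apply/orP; right; apply/imsetP; exists w.
- by move=> /imsetP[w wC [-> ->]]; apply/orP; left; apply/orP; right; apply/imsetP; exists w.
Qed.

Lemma kept_merge_fst a b a' b' : (a, b) \in kept -> (a', b') \in kept ->
  merge a = merge a' -> merge b = merge b' -> a = a'.
Proof.
have key c d c' d' : (c, d) \in kept -> (c', d') \in kept -> c = y -> c' = x ->
    merge d = merge d' -> False.
  rewrite !inE /= => /andP[lost_cd /and3P[_ dS Ecd]] /andP[_ /and3P[_ _ Ecd']] cy c'x; subst c c'.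
  rewrite /merge; case: (eqVneq d y) => [dy | ndy]; first by rewrite dy irrE in Ecd.
  case: (eqVneq d' y) => [d'y dx | _ dd']; first by rewrite dx eqxx !orbT in lost_cd.
  subst d'.
  apply/(negP lost_cd)/orP; left; apply/orP; right.
  by apply/imsetP; exists d; rewrite // inE dS Ecd Ecd'.
move=> kab ka'b' ma mb; case: (eqVneq a a') => // naa'.
have [[ay a'x] | [ax a'y]] : a = y /\ a' = x \/ a = x /\ a' = y.
  move: ma naa'; rewrite /merge.
  case: (eqVneq a y) => [->|nay]; case: (eqVneq a' y) => [->|na'y] //=.
  - by move=> ->; left.
  - by move=> ->; right.
  - by move=> ->; rewrite eqxx.
- by have [] := key _ _ _ _ kab ka'b' ay a'x mb.
- by have [] := key _ _ _ _ ka'b' kab a'y ax (esym mb).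
Qed.

Lemma degsum_contract : degsum S E <= degsum (S :\ y) (contract E x y) + 2 + 2 * #|C|.
Proof.
rewrite !degsum_arcs -addnA.
have le_lost : #|lost| <= 2 + 2 * #|C|.
  apply: leq_trans (leq_card_setU _ _) _.
  rewrite mul2n -addnn addnA leq_add ?leq_imset_card //.
  apply: leq_trans (leq_card_setU _ _) _; rewrite leq_add ?leq_imset_card //.
  by rewrite cards2; case: (_ != _).
pose f (p : T * T) := (merge p.1, merge p.2).
have card_kept : #|kept| = #|f @: kept|.
  rewrite card_in_imset // => -[a b] [a' b'] kab ka'b' /= [ma mb].
  by rewrite (kept_merge_fst kab ka'b' ma mb) (kept_merge_fst (kept_swap kab) (kept_swap ka'b') mb ma).
have sub_f : f @: kept \subset arcs (S :\ y) (contract E x y).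
  apply/subsetP => q /imsetP[[a b] kab ->]; move: (kab).
  rewrite !inE /= => /andP[lost_ab /and3P[aS bS Eab]].
  have merge_S z : z \in S -> merge z \in S :\ y.
    have nxy : x != y by apply: contraTneq Exy => ->; rewrite irrE.
    by move=> zS; rewrite /merge !inE; case: (eqVneq z y) => [_|->]; rewrite ?nxy ?xS ?zS.
  move: (merge_S _ aS) (merge_S _ bS); rewrite !inE => -> ->; rewrite /contract /= /merge.
  case: (eqVneq a y) => [ay|nay]; case: (eqVneq b y) => [by_|nby].
  - by rewrite ay by_ irrE in Eab.
  - rewrite eqxx -ay Eab orbT andbT; apply: contraNneq lost_ab => xb.
    by rewrite ay -xb; apply/orP; left; apply/orP; left; apply/orP; right.
  - rewrite eqxx -by_ Eab !orbT andbT; apply: contraNneq lost_ab => ax.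
    by rewrite by_ ax; apply/orP; left; apply/orP; left; apply/orP; left.
  - by rewrite Eab andbT; apply: contraTneq Eab => ->; rewrite irrE.
apply: leq_trans (_ : #|kept| + #|lost| <= _).
  by rewrite -(cardsID lost (arcs S E)) addnC leq_add2l subset_leq_card ?subsetIr.
by rewrite leq_add // card_kept subset_leq_card.
Qed.

Lemma minor_in_contract k : minor_in (S :\ y) (contract E x y) k -> minor_in S E k.
Proof.
pose beta u := if u == x then [set x; y] else [set u].
apply: (@minor_in_branch _ S (S :\ y) E (contract E x y) beta).
- move=> u; rewrite /beta !inE => /andP[_ uS]; apply/subsetP => z.
  by case: (u == x); rewrite !inE; [move=> /orP[] /eqP -> | move=> /eqP ->].
- move=> u a b _; rewrite /beta.
  case: (eqVneq u x) => [_|_]; last by rewrite !inE => /eqP -> /eqP ->; exact: connect0.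
  have cxy : connect (induced E [set x; y]) x y.
    by apply: connect1; rewrite /induced /= Exy !inE !eqxx orbT.
  have cyx : connect (induced E [set x; y]) y x.
    by rewrite (sym_connect_sym (induced_sym _ symE)).
  rewrite !inE; move=> /orP[] /eqP-> /orP[] /eqP->; by [apply: connect0 | |].
- move=> u w; rewrite !inE => /andP[nuy uS] /andP[nwy wS].
  move=> /andP[nuw /or3P[Euw|/andP[/eqP ux Eyw]|/andP[/eqP wx Euy]]].
  + exists u, w; rewrite /beta; split => //.
    * by case: (eqVneq u x) => [->|_]; rewrite !inE eqxx ?orbT.
    * by case: (eqVneq w x) => [->|_]; rewrite !inE eqxx ?orbT.
  + exists y, w; rewrite /beta ux eqxx; split => //; first by rewrite !inE eqxx orbT.
    by rewrite -ux eq_sym (negbTE nuw) inE.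
  + exists u, y; rewrite /beta wx eqxx; split => //; last by rewrite !inE eqxx orbT.
    by rewrite -wx (negbTE nuw) inE.
- move=> u _; rewrite /beta; apply/set0Pn; exists u.
  by case: (u == x) /eqP => [->|_]; rewrite !inE eqxx.
- move=> u w; rewrite !inE => /andP[nuy _] /andP[nwy _] nuw; rewrite /beta.
  rewrite -setI_eq0; apply/eqP/setP => z; rewrite !inE.
  case: (eqVneq u x) => [ux|nux]; case: (eqVneq w x) => [wx|nwx].
  - by move: nuw; rewrite ux wx eqxx.
  - apply/negP; rewrite !inE => /andP[zxy /eqP wz]; subst z.
    by move: zxy => /orP[] /eqP wxy; [move: nwx | move: nwy]; rewrite wxy eqxx.
  - apply/negP; rewrite !inE => /andP[/eqP uz wxy]; subst z.
    by move: wxy => /orP[] /eqP uxy; [move: nux | move: nuy]; rewrite -uxy eqxx.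
  - by apply/negP; rewrite !inE => /andP[/eqP -> /eqP wu]; move: nuw; rewrite wu eqxx.
Qed.

End Contraction.

Lemma common_nbrs_of_sparse_contraction r S E x z :
  symmetric E -> irreflexive E -> x \in S -> z \in S -> E x z ->
  2 ^ r.+2 * #|S| <= degsum S E ->
  degsum (S :\ z) (contract E x z) < 2 ^ r.+2 * #|S :\ z| ->
  2 ^ r.+1 <= #|common_nbrs S E x z|.
Proof.
move=> symE irrE xS zS Exz dense sparse.
have := degsum_contract symE irrE xS Exz.
move: dense sparse; rewrite (cardsD1 z S) zS expnS.
set P := 2 ^ r.+1; set s := #|S :\ z|; set c := #|common_nbrs S E x z|; lia.
Qed.

Lemma degsum_edge S E : 0 < degsum S E -> exists x y, [/\ x \in S, y \in S & E x y].
Proof.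
rewrite degsum_arcs => /card_gt0P[[x y]].
by rewrite inE => /and3P[xS yS Exy]; exists x, y.
Qed.

(* Either contracting some edge [xz] keeps the density, or every neighbour [z] of [x]
   shares [2 ^ r.+1] neighbours with [x]; then the neighbourhood of [x] carries a
   [K_r.+1] minor by induction on [r], and [x] extends it. *)
Lemma minor_in_of_degsum r S E : symmetric E -> irreflexive E -> 0 < #|S| ->
  2 ^ r.+1 * #|S| <= degsum S E -> minor_in S E r.+1.
Proof.
elim: r S E => [|r IHr] S E symE irrE S_gt0 dense.
  have /card_gt0P[x xS] := S_gt0.
  exists (fun _ => [set x]); split=> [_|_|_ a b|i j|i j]; rewrite ?(ord1 i) ?(ord1 j) ?eqxx //.
  - by rewrite sub1set.
  - by apply/set0Pn; exists x; rewrite inE.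
  - by rewrite !inE => /eqP -> /eqP ->.
have [n] := ubnP #|S|; elim: n S E symE irrE S_gt0 dense => // n IHn S E symE irrE S_gt0 dense.
move=> ltSn; have [x [y [xS yS Exy]]] : exists x y, [/\ x \in S, y \in S & E x y].
  by apply: degsum_edge; apply: leq_trans dense; rewrite muln_gt0 expn_gt0.
case: (boolP [exists z in S, E x z &&
    (2 ^ r.+2 * #|S :\ z| <= degsum (S :\ z) (contract E x z))]).
  move=> /exists_inP[z zS /andP[Exz dense']].
  apply: (minor_in_contract symE xS zS Exz); apply: (IHn _ _ _ _ _ dense').
  - exact: contract_sym.
  - exact: contract_irr.
  - apply/card_gt0P; exists x; rewrite !inE xS andbT.
    by apply: contraTneq Exz => ->; rewrite irrE.
  - by move: ltSn; rewrite (cardsD1 z S) zS.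
move=> /exists_inPn sparse; pose N := [set z in S | E x z].
apply: (@minor_in_cone _ S N _ _ x symE) => //.
- by apply/subsetP => z; rewrite inE => /andP[].
- by rewrite inE irrE andbF.
- by move=> z; rewrite inE => /andP[].
apply: IHr => //; first by apply/card_gt0P; exists y; rewrite inE yS Exy.
rewrite /degsum mulnC -sum_nat_const; apply: leq_sum => z; rewrite inE => /andP[zS Exz].
apply: leq_trans (common_nbrs_of_sparse_contraction symE irrE xS zS Exz dense _) _.
  by move: (sparse z zS); rewrite Exz ltnNge.
by apply: subset_leq_card; apply/subsetP => w; rewrite !inE andbA.
Qed.

Definition degenerate S E D := forall S', S' \subset S -> S' != set0 ->
  exists2 x, x \in S' & deg S' E x < D.

Lemma minor_free_degenerate r S E : symmetric E -> irreflexive E ->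
  ~ minor_in S E r.+1 -> degenerate S E (2 ^ r.+1).
Proof.
move=> symE irrE noK S' sS'S S'_neq0.
case: (boolP [exists x in S', deg S' E x < 2 ^ r.+1]) => [/exists_inP[x]|]; first by exists x.
move=> /exists_inPn large; exfalso; apply/noK/(minor_in_subset sS'S).
apply: minor_in_of_degsum => //; first by rewrite card_gt0.
rewrite /degsum mulnC -sum_nat_const; apply: leq_sum => z zS'.
by rewrite leqNgt large.
Qed.

End Density.

Section Degeneracy.
Variables (T : finType) (D : nat).
Implicit Types (S : {set T}) (E : rel T).

Definition orientation S E (o : rel T) :=
  [/\ (forall u w, o u w -> [&& u \in S, w \in S & E u w]),
      (forall u w, u \in S -> w \in S -> E u w -> o u w || o w u) &
      (forall u, #|[set w | o u w]| < D)].

Definition proper_colouring S E (col : T -> 'I_D) :=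
  forall u w, u \in S -> w \in S -> E u w -> col u != col w.

Definition orient_colouring S E o col := orientation S E o /\ proper_colouring S E col.

Lemma orient_colouring0 E (D_gt0 : 0 < D) :
  orient_colouring set0 E (fun _ _ => false) (fun _ => Ordinal D_gt0).
Proof.
split=> [|u w]; rewrite ?inE //; split=> [//|u w|u]; rewrite ?inE //.
by rewrite (@eq_card0 _ [set w | false]) // => w; rewrite inE.
Qed.

(* Orient all edges at [v] away from [v] and give [v] a colour unused by its neighbours. *)
Lemma orient_colouring_add S E v o col : symmetric E -> irreflexive E ->
  v \in S -> deg S E v < D -> orient_colouring (S :\ v) E o col ->
  {o' : rel T & {col' : T -> 'I_D | orient_colouring S E o' col'}}.
Proof.
move=> symE irrE vS lt_vD [[o_sub o_tot o_deg] col_ok].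
pose N := [set w in S | E v w].
have /card_gt0P/sigW[c] : 0 < #|~: (col @: N)|.
  rewrite -(ltn_add2l #|col @: N|) addn0 cardsC card_ord.
  exact: leq_ltn_trans (leq_imset_card _ _) lt_vD.
rewrite inE => c_unused.
exists (fun u w => o u w || (u == v) && (w \in N)).
exists (fun u => if u == v then c else col u); split; first split.
- move=> u w /orP[/o_sub|/andP[/eqP -> ]]; last by rewrite inE vS => /andP[-> ->].
  by rewrite !inE => /and3P[/andP[_ ->] /andP[_ ->] ->].
- move=> u w uS wS Euw.
  case: (eqVneq u v) => [uv|nuv]; first by subst u; rewrite inE wS Euw !orbT.
  case: (eqVneq w v) => [wv|nwv]; first by subst w; rewrite !inE uS symE Euw !orbT.
  have uSv : u \in S :\ v by rewrite !inE nuv.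
  have wSv : w \in S :\ v by rewrite !inE nwv.
  by have /orP[->|->] := o_tot u w uSv wSv Euw; rewrite ?orbT.
- move=> u; case: (eqVneq u v) => [->|nuv].
    apply: leq_ltn_trans lt_vD; apply: subset_leq_card; apply/subsetP => w.
    by rewrite !inE /= => /orP[/o_sub|//]; rewrite !inE eqxx.
  apply: leq_ltn_trans (o_deg u); apply: subset_leq_card; apply/subsetP => w.
  by rewrite !inE /= orbF.
- have used w : w \in S -> E v w -> c != col w.
    by move=> wS Evw; apply: contraNneq c_unused => ->; apply/imsetP; exists w; rewrite ?inE ?wS.
  move=> u w uS wS Euw.
  case: (eqVneq u v) => [uv|nuv]; case: (eqVneq w v) => [wv|nwv].
  + by rewrite uv wv irrE in Euw.
  + by apply: used; rewrite -?uv.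
  + by rewrite eq_sym; apply: used; rewrite -?wv // symE.
  + by apply: col_ok; rewrite // !inE ?nuv ?nwv.
Qed.

Lemma degenerate_orient_colouring S E : 0 < D -> symmetric E -> irreflexive E ->
  degenerate S E D -> {o : rel T & {col : T -> 'I_D | orient_colouring S E o col}}.
Proof.
move=> D_gt0 symE irrE; have [n] := ubnP #|S|; elim: n S => // n IHn S ltSn degS.
case: (set_0Vmem S) => [-> | [v0 v0S]].
  by exists (fun _ _ => false), (fun _ => Ordinal D_gt0); exact: orient_colouring0.
have /sigW[v /andP[vS lt_vD]] : exists v, (v \in S) && (deg S E v < D).
  have [|v vS lt_vD] := degS S (subxx S); first by apply/set0Pn; exists v0.
  by exists v; rewrite vS.
have ltS'n : #|S :\ v| < n by move: ltSn; rewrite (cardsD1 v S) vS.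
have degS' : degenerate (S :\ v) E D.
  by move=> S' sS'; apply: degS; apply: subset_trans sS' (subD1set _ _).
have [o [col oc]] := IHn _ ltS'n degS'.
exact: orient_colouring_add oc.
Qed.

End Degeneracy.

Lemma InP (A : eqType) (x : A) (s : seq A) : reflect (List.In x s) (x \in s).
Proof.
elim: s => [|y s IHs] /=; first by right.
rewrite inE; case: eqVneq => [->|nxy]; first by left; left.
by apply: (iffP IHs) => [|[yx|//]]; [right | by rewrite yx eqxx in nxy].
Qed.

Lemma In_flatten (A : Type) (ss : seq (seq A)) x :
  List.In x (flatten ss) <-> exists s, List.In s ss /\ List.In x s.
Proof. exact: List.in_concat. Qed.

Lemma pairwise_In (A : Type) (r : rel A) (s : seq A) x y :
  pairwise r s -> List.In x s -> List.In y s -> [\/ x = y, r x y | r y x].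
Proof.
elim: s => [|z s IHs] //= /andP[/List.forallb_forall rz ps] [<-|xs] [<-|ys].
- by constructor 1.
- by constructor 2; apply: rz.
- by constructor 3; apply: rz.
- exact: IHs.
Qed.

Lemma prefix_preserved_last (T : finType) (e : rel T) (t : rtree T) p : gpath e p -> preserves t (Defs.prefix p) ->
  exists u v, [/\ u \in tV t, e u v, troot t \in p, v \in p &
    forall W : {set T}, tV t \subset W -> v \in W -> all (mem W) p].
Proof.
case: p => [//|x q] /= /andP[path_xq _] /andP[prefix_t root_prefix].
case/lastP: q path_xq prefix_t root_prefix => [//|q v].
rewrite belast_rcons rcons_path -rcons_cons mem_rcons => /andP[_ euv] prefix_t root_prefix.
exists (last x q), v; split => //; first exact: (allP prefix_t _ (mem_last _ _)).
- by rewrite inE root_prefix orbT.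
- by rewrite mem_rcons mem_head.
move=> W tW vW; have : all (mem W) (x :: q).
  by apply/allP => y /(allP prefix_t) yt; apply: subsetP tW _ yt.
by move=> /= /andP[-> qW]; rewrite all_rcons qW andbT.
Qed.

Section ForestContraction.
Variables (T : finType) (e : rel T) (F : seq (rtree T)).
Hypotheses (sym_e : symmetric e) (bfs_F : is_bfs_forest e F).

Lemma forest_tree_eq t1 t2 v : List.In t1 F -> List.In t2 F ->
  v \in tV t1 -> v \in tV t2 -> t1 = t2.
Proof.
move=> t1F t2F vt1 vt2; case: bfs_F => _ disjF.
by case: (pairwise_In disjF t1F t2F) => // /pred0P/(_ v); rewrite /= ?vt1 ?vt2.
Qed.

Lemma forest_tree_bfs t : List.In t F -> is_bfs_tree e t.
Proof. by case: bfs_F => bfs_trees _; apply: bfs_trees. Qed.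

Lemma forest_root_in t : List.In t F -> troot t \in tV t.
Proof. by move=> /forest_tree_bfs[[]]. Qed.

Lemma forest_tree_connect t x y : List.In t F -> x \in tV t -> y \in tV t ->
  connect (induced e (tV t)) x y.
Proof.
move=> /forest_tree_bfs[[tE_sub _ _ tE_conn _] _] xt yt.
by apply: connect_sub (tE_conn _ _ xt yt) => a b /tE_sub Eab; apply: connect1.
Qed.

(* Contracting every tree of [F] onto its root: [rep v] is the vertex [v] becomes. *)
Definition owner v := ohead [seq t <- F | v \in tV t].
Definition rep v := if owner v is Some t then troot t else v.

Lemma ownerP v : (exists t, [/\ owner v = Some t, List.In t F & v \in tV t]) \/
  (owner v = None /\ forall t, List.In t F -> v \notin tV t).
Proof.
rewrite /owner; elim: F => [|t s IHs] /=; first by right.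
case vt: (v \in tV t) => /=; first by left; exists t; split => //; left.
case: IHs => [[t' [? ? ?]]|[? vs]]; first by left; exists t'; split => //; right.
by right; split => // t' [<-|t's]; [exact: negbT | apply: vs].
Qed.

Lemma rep_tree t v : List.In t F -> v \in tV t -> rep v = troot t.
Proof.
move=> tF vt; rewrite /rep; case: (ownerP v) => [[t' [-> t'F vt']]|[_ vF]].
  by rewrite (forest_tree_eq t'F tF vt' vt).
by have := vF _ tF; rewrite vt.
Qed.

Lemma rep_free v : (forall t, List.In t F -> v \notin tV t) -> rep v = v.
Proof.
move=> vF; rewrite /rep; case: (ownerP v) => [[t [-> tF vt]]|[-> _]] //.
by have := vF _ tF; rewrite vt.
Qed.

Definition fibre u := [set b | rep b == u].

Lemma fibre_tree t : List.In t F -> fibre (troot t) = tV t.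
Proof.
move=> tF; apply/setP => b; rewrite inE.
case bt: (b \in tV t); first by rewrite (rep_tree tF bt) eqxx.
apply/negP => /eqP rep_b; case: (ownerP b) => [[t' [ob t'F bt']]|[ob _]].
  move: rep_b; rewrite /rep ob => root_eq.
  have rt' := forest_root_in t'F; rewrite root_eq in rt'.
  by rewrite -(forest_tree_eq t'F tF rt' (forest_root_in tF)) bt' in bt.
by move: rep_b; rewrite /rep ob => bt_root; rewrite bt_root forest_root_in in bt.
Qed.

Lemma fibre_free v : (forall t, List.In t F -> v \notin tV t) -> fibre v = [set v].
Proof.
move=> vF; apply/setP => b; rewrite !inE.
case: (ownerP b) => [[t [ob tF bt]]|[ob _]]; last by rewrite /rep ob.
rewrite /rep ob; apply/idP/idP => /eqP bv.
  by have := vF _ tF; rewrite -bv forest_root_in.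
by have := vF _ tF; rewrite -bv bt.
Qed.

Definition contracted_vertices := [set rep v | v in T].
Definition contracted_edge : rel T := fun u w =>
  (u != w) && [exists a, exists b, (rep a == u) && (rep b == w) && e a b].

Lemma contracted_edge_sym : symmetric contracted_edge.
Proof.
move=> u w; rewrite /contracted_edge eq_sym; congr (_ && _).
by apply/existsP/existsP => -[a /existsP[b /andP[/andP[ra rb] eab]]];
  exists b; apply/existsP; exists a; rewrite ra rb sym_e.
Qed.

Lemma contracted_edge_irr : irreflexive contracted_edge.
Proof. by move=> u; rewrite /contracted_edge eqxx. Qed.

Lemma fibre_connect u a b : u \in contracted_vertices -> a \in fibre u -> b \in fibre u ->
  connect (induced e (fibre u)) a b.
Proof.
move=> /imsetP[v _ ->]; case: (ownerP v) => [[t [_ tF vt]]|[_ vF]].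
  by rewrite (rep_tree tF vt) fibre_tree //; exact: forest_tree_connect.
by rewrite (rep_free vF) fibre_free // !inE => /eqP -> /eqP ->.
Qed.

Lemma minor_in_contracted k :
  minor_in contracted_vertices contracted_edge k -> has_K_minor e k.
Proof.
move=> K; apply: (@minor_in_has_K_minor _ setT).
apply: (@minor_in_branch _ setT contracted_vertices e contracted_edge fibre) K.
- by move=> u _; apply: subsetT.
- exact: fibre_connect.
- move=> u w _ _ /andP[_ /existsP[a /existsP[b /andP[/andP[ra rb] eab]]]].
  by exists a, b; rewrite !inE ra rb.
- by move=> u /imsetP[v _ ->]; apply/set0Pn; exists v; rewrite inE.
- move=> u w _ _ nuw; rewrite -setI_eq0; apply/eqP/setP => b; rewrite !inE.
  by apply/negP => /andP[/eqP rbu /eqP rbw]; rewrite -rbu -rbw eqxx in nuw.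
Qed.

Section Colour.
Variables (D : nat) (col : T -> 'I_D).
Hypothesis col_proper : proper_colouring contracted_vertices contracted_edge col.

Definition forest_root u := has (fun t => u \in tV t) F && (rep u == u).

Definition side (left : bool) (a : 'I_D) :=
  if left then [set u | forest_root u && (col u == a)] else [set v | col (rep v) != a].

Definition bip_vertices a := side true a :|: side false a.

Definition bip_edge a : rel T := fun u w =>
  let adj u w := [exists b, (rep b == u) && e b w] in
  (u \in side true a) && (w \in side false a) && adj u w ||
  (w \in side true a) && (u \in side false a) && adj w u.

Definition bip_branch a u := if u \in side true a then fibre u else [set u].

Lemma side_disjoint k a u : u \in side k a -> u \notin side (~~ k) a.
Proof.
case: k; rewrite !inE /=; first by move=> /andP[/andP[_ /eqP ->] /eqP ->]; rewrite eqxx.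
by move=> nu; apply/negP => /andP[/andP[_ /eqP ru] /eqP cu]; rewrite ru cu eqxx in nu.
Qed.

Lemma side_bip k a u : u \in side k a -> u \in bip_vertices a.
Proof. by case: k => uS; rewrite inE uS ?orbT. Qed.

Lemma side_left_tree a u : u \in side true a -> exists2 t, List.In t F & bip_branch a u = tV t.
Proof.
move=> uL; move: (uL); rewrite inE => /andP[/andP[/List.existsb_exists[t [tF ut]] /eqP ru] _].
by exists t; rewrite // /bip_branch uL -ru (rep_tree tF ut) fibre_tree.
Qed.

Lemma bip_branch_right a u : u \in side false a -> bip_branch a u = [set u].
Proof. by move=> /(side_disjoint (k := false)) uL; rewrite /bip_branch (negbTE uL). Qed.

Lemma bip_edge_sym a : symmetric (bip_edge a).
Proof. by move=> u w; rewrite /bip_edge orbC. Qed.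

Lemma bip_edge_irr a : irreflexive (bip_edge a).
Proof.
move=> u; rewrite /bip_edge orbb; apply/negP => /andP[/andP[uL uR] _].
by rewrite (negbTE (side_disjoint uL)) in uR.
Qed.

Lemma bip_branch_self a u : u \in bip_vertices a -> u \in bip_branch a u.
Proof.
rewrite inE => /orP[uL|uR]; last by rewrite bip_branch_right // inE.
by rewrite /bip_branch uL inE; move: uL; rewrite inE => /andP[/andP[_ ->]].
Qed.

Lemma bip_branch_connect a u x y : u \in bip_vertices a ->
  x \in bip_branch a u -> y \in bip_branch a u -> connect (induced e (bip_branch a u)) x y.
Proof.
rewrite inE => /orP[uL|uR].
  by have [t tF ->] := side_left_tree uL; exact: forest_tree_connect.
by rewrite bip_branch_right // !inE => /eqP -> /eqP ->.
Qed.

Lemma bip_branch_edge a u w : u \in bip_vertices a -> w \in bip_vertices a ->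
  bip_edge a u w -> exists x y, [/\ x \in bip_branch a u, y \in bip_branch a w & e x y].
Proof.
move=> _ _ /orP[] /andP[/andP[xL yR] /existsP[b /andP[/eqP rb eb]]].
  by exists b, w; rewrite (bip_branch_right yR) /bip_branch xL !inE rb eqxx.
by exists u, b; rewrite (bip_branch_right yR) /bip_branch xL !inE rb eqxx sym_e.
Qed.

Lemma bip_branch_disjoint a u w : u \in bip_vertices a -> w \in bip_vertices a ->
  u != w -> [disjoint bip_branch a u & bip_branch a w].
Proof.
have left_right x y b : x \in side true a -> y \in side false a ->
    b \in bip_branch a x -> b \notin bip_branch a y.
  move=> xL yR; rewrite (bip_branch_right yR) /bip_branch xL !inE => /eqP rbx.
  apply: contraTneq yR => by_; rewrite inE negbK -by_ rbx.
  by move: xL; rewrite inE => /andP[_].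
move=> uS wS nuw; apply/pred0P => b /=; apply/negP => /andP[bu bw].
move: uS wS; rewrite !in_setU => /orP[uL|uR] /orP[wL|wR].
- move: bu bw; rewrite /bip_branch uL wL !inE => /eqP rbu /eqP rbw.
  by rewrite -rbu -rbw eqxx in nuw.
- by rewrite (negbTE (left_right _ _ _ uL wR bu)) in bw.
- by rewrite (negbTE (left_right _ _ _ wL uR bw)) in bu.
- move: bu bw; rewrite !bip_branch_right // !inE => /eqP bu /eqP bw.
  by rewrite -bu -bw eqxx in nuw.
Qed.

Lemma minor_in_bip a k : minor_in (bip_vertices a) (bip_edge a) k -> has_K_minor e k.
Proof.
move=> K; apply: (@minor_in_has_K_minor _ setT).
apply: (@minor_in_branch _ setT (bip_vertices a) e (bip_edge a) (bip_branch a)) K.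
- by move=> u _; apply: subsetT.
- exact: bip_branch_connect.
- exact: bip_branch_edge.
- by move=> u uS; apply/set0Pn; exists u; apply: bip_branch_self.
- exact: bip_branch_disjoint.
Qed.

Lemma exit_edge_bip t u v : List.In t F -> u \in tV t -> v \notin tV t -> e u v ->
  let a := col (troot t) in
  [/\ troot t \in side true a, v \in side false a & bip_edge a (troot t) v].
Proof.
move=> tF ut vt euv a; have rt := forest_root_in tF.
have rep_root : rep (troot t) = troot t := rep_tree tF rt.
have rootL : troot t \in side true a.
  by rewrite inE /forest_root rep_root eqxx andbT; apply/andP; split => //; apply/List.existsb_exists; exists t.
have vR : v \in side false a.
  rewrite inE eq_sym /a; apply: col_proper.
  - by rewrite -rep_root; apply: imset_f.
  - exact: imset_f.
  rewrite /contracted_edge; apply/andP; split.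
    by apply: contraNneq vt => rv; rewrite -(fibre_tree tF) inE rv.
  by apply/existsP; exists u; apply/existsP; exists v; rewrite (rep_tree tF ut) !eqxx.
split => //; apply/orP; left; rewrite rootL vR /=.
by apply/existsP; exists u; rewrite (rep_tree tF ut) eqxx euv.
Qed.

Section Stars.
Variable o : 'I_D -> rel T.
Hypothesis o_orientation : forall a, orientation D (bip_vertices a) (bip_edge a) (o a).

Lemma arc_bip_edge a u w : o a u w -> bip_edge a u w.
Proof. by case: (o_orientation a) => o_sub _ _ /o_sub/and3P[]. Qed.

Definition out_index a u c := index c (enum [set w | o a u w]).

(* For fixed [k a i] the stars are disjoint: a leaf has one out-neighbour of index [i]. *)
Definition star k a i c := c |: [set u in side (~~ k) a | o a u c && (out_index a u c == i)].
Definition star_set k a i c := \bigcup_(u in star k a i c) bip_branch a u.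
Definition star_tree k a i c := bfs_tree e (star_set k a i c) c.
Definition star_forest k a i := [seq star_tree k a i c | c <- enum (side k a)].
Definition star_indices :=
  [seq (k, ai) | k <- [:: true; false], ai <- [seq (a, i) | a <- enum 'I_D, i <- iota 0 D]].
Definition expansion := F :: [seq star_forest p.1 p.2.1 p.2.2 | p <- star_indices].

Lemma size_expansion : size expansion = 1 + 2 * (D * D).
Proof.
by rewrite /expansion -cat1s size_cat size_map !size_allpairs size_enum_ord size_iota.
Qed.

Lemma star_sub k a i c : c \in side k a -> star k a i c \subset bip_vertices a.
Proof.
move=> cS; apply/subsetP => u /setU1P[->|]; first exact: side_bip cS.
by rewrite inE => /andP[uS _]; exact: side_bip uS.
Qed.

Lemma star_connect k a i c : forall u w, u \in star k a i c -> w \in star k a i c ->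
  connect (induced (bip_edge a) (star k a i c)) u w.
Proof.
have c_star : c \in star k a i c by rewrite !inE eqxx.
have to_c u : u \in star k a i c -> connect (induced (bip_edge a) (star k a i c)) u c.
  move=> us; move: (us); rewrite !inE => /orP[/eqP -> //|/and3P[_ ouc _]].
  by apply: connect1; rewrite /induced /= (arc_bip_edge ouc) us c_star.
move=> u w us ws; apply: connect_trans (to_c _ us) _.
by rewrite (sym_connect_sym (induced_sym _ (@bip_edge_sym a))); apply: to_c.
Qed.

Lemma centre_in_star_set k a i c : c \in side k a -> c \in star_set k a i c.
Proof.
move=> cS; apply/bigcupP; exists c; first by rewrite !inE eqxx.
exact/bip_branch_self/(side_bip cS).
Qed.

Lemma star_tree_bfs k a i c : c \in side k a -> is_bfs_tree e (star_tree k a i c).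
Proof.
move=> cS; apply: bfs_tree_is_bfs => //; first exact: centre_in_star_set.
apply: (@connect_bigcup_branch _ (bip_vertices a) e (bip_edge a) (bip_branch a)).
- exact: bip_branch_connect.
- exact: bip_branch_edge.
- exact: star_sub cS.
- exact: star_connect.
Qed.

Lemma star_centre_unique k a i c c' u : c \in side k a -> c' \in side k a ->
  u \in star k a i c -> u \in star k a i c' -> c = c'.
Proof.
move=> cS c'S; rewrite !inE => /orP[/eqP uc|/and3P[uS ouc /eqP iuc]]
  /orP[/eqP uc'|/and3P[uS' ouc' /eqP iuc']].
- by rewrite -uc -uc'.
- by rewrite uc (negbTE (side_disjoint cS)) in uS'.
- by rewrite uc' (negbTE (side_disjoint c'S)) in uS.
have cs : c \in enum [set w | o a u w] by rewrite mem_enum inE.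
have c's : c' \in enum [set w | o a u w] by rewrite mem_enum inE.
by rewrite -(nth_index c cs) -(nth_index c c's) -/(out_index a u c) iuc -iuc'.
Qed.

Lemma star_set_disjoint k a i c c' : c \in side k a -> c' \in side k a -> c != c' ->
  [disjoint star_set k a i c & star_set k a i c'].
Proof.
move=> cS c'S ncc'; apply/pred0P => x /=; apply/negP.
move=> /andP[/bigcupP[u us xu] /bigcupP[u' us' xu']].
case: (eqVneq u u') => [uu'|nuu'].
  by rewrite -uu' in us'; rewrite (star_centre_unique cS c'S us us') eqxx in ncc'.
have := bip_branch_disjoint (subsetP (star_sub i cS) _ us) (subsetP (star_sub i c'S) _ us') nuu'.
by move=> /pred0P/(_ x); rewrite /= xu xu'.
Qed.

Lemma star_forest_bfs k a i : is_bfs_forest e (star_forest k a i).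
Proof.
split.
  by move=> t /List.in_map_iff[c [<- /InP]]; rewrite mem_enum; apply: star_tree_bfs.
rewrite /star_forest pairwise_map.
apply: (@sub_in_pairwise _ (mem (enum (side k a))) [rel x y | x != y]).
- by move=> c c'; rewrite !mem_enum; exact: star_set_disjoint.
- exact/allP.
- by rewrite -uniq_pairwise enum_uniq.
Qed.

Lemma expansion_bfs F' : List.In F' expansion -> is_bfs_forest e F'.
Proof. by case=> [<- // | /List.in_map_iff[p [<- _]]]; exact: star_forest_bfs. Qed.

Lemma oriented_edge_star_tree k a u c : c \in side k a -> u \in side (~~ k) a -> o a u c ->
  exists2 t', List.In t' (flatten expansion) &
    troot t' = c /\ bip_branch a u :|: bip_branch a c \subset tV t'.
Proof.
move=> cS uS ouc; set i := out_index a u c.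
have iD : i < D.
  have [_ _ o_outdeg] := o_orientation a.
  apply: leq_trans (o_outdeg u); rewrite cardE ltnS ltnW // index_mem.
  by rewrite mem_enum inE.
have us : u \in star k a i c by rewrite !inE uS ouc eqxx orbT.
have cs : c \in star k a i c by rewrite !inE eqxx.
exists (star_tree k a i c); last first.
  split => //; apply/subsetP => x; rewrite inE => /orP[] xb; apply/bigcupP; by [exists u | exists c].
apply: (proj2 (In_flatten _ _)); exists (star_forest k a i); split.
  right; apply/List.in_map_iff; exists (k, (a, i)); split => //.
  apply/InP; apply: allpairs_f; first by case: k {cS uS us cs}.
  by apply: allpairs_f; rewrite ?mem_enum ?mem_iota.
by apply/List.in_map_iff; exists c; split => //; apply/InP; rewrite mem_enum.
Qed.

Lemma expansion_preserves t p : List.In t F -> gpath e p ->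
  preserves t (Defs.prefix p) -> preserved_by (flatten expansion) p.
Proof.
move=> tF p_path /(prefix_preserved_last p_path)[u [v [ut euv root_p vp all_p]]].
case vt : (v \in tV t).
  exists t; split; first by apply: (proj2 (In_flatten _ _)); exists F; split; [left|].
  by rewrite /preserves root_p andbT; apply: all_p.
have [rootL vR bip_rv] := exit_edge_bip tF ut (negbT vt) euv.
set a := col (troot t) in rootL vR bip_rv.
have branch_root : bip_branch a (troot t) = tV t by rewrite /bip_branch rootL fibre_tree.
have [_ o_total _] := o_orientation a.
case/orP: (o_total _ _ (side_bip rootL) (side_bip vR) bip_rv) => orient.
- have [t' t'_in [root_t' sub_t']] := oriented_edge_star_tree vR rootL orient.
  exists t'; split => //; rewrite /preserves root_t' vp andbT; apply: all_p.
    by apply: subset_trans sub_t'; rewrite -branch_root subsetUl.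
  by apply: (subsetP sub_t'); rewrite (bip_branch_right vR) !inE eqxx orbT.
- have [t' t'_in [root_t' sub_t']] := oriented_edge_star_tree rootL vR orient.
  exists t'; split => //; rewrite /preserves root_t' root_p andbT; apply: all_p.
    by apply: subset_trans sub_t'; rewrite -branch_root subsetUr.
  by apply: (subsetP sub_t'); rewrite (bip_branch_right vR) !inE eqxx.
Qed.

Lemma expansion_tree_bfs t : List.In t (flatten expansion) -> is_bfs_tree e t.
Proof. by move=> /In_flatten[F' [/expansion_bfs[bfsF' _] tF']]; apply: bfsF'. Qed.

Lemma expansion_root_expansion : root_expansion_forest e F expansion.
Proof.
split=> [|t tF]; first exact: expansion_bfs.
by split=> [|p]; [exact: expansion_tree_bfs | exact: expansion_preserves].
Qed.

End Stars.

End Colour.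

End ForestContraction.

Lemma root_expansion_minor_free (T : finType) (e : rel T) r (F : seq (rtree T)) :
  symmetric e -> ~ has_K_minor e r.+1 -> is_bfs_forest e F ->
  exists FF, root_expansion_forest e F FF /\ size FF = 1 + 2 * (2 ^ r.+1 * 2 ^ r.+1).
Proof.
move=> sym_e noK bfs_F; set D := 2 ^ r.+1; have D_gt0 : 0 < D by rewrite expn_gt0.
have degenerate_minor_free (S : {set T}) (E : rel T) : symmetric E -> irreflexive E ->
    (forall k, minor_in S E k -> has_K_minor e k) -> degenerate S E D.
  by move=> symE irrE lift; apply: minor_free_degenerate => // /lift.
have symH := contracted_edge_sym F sym_e.
have irrH := @contracted_edge_irr _ e F.
have degH := degenerate_minor_free _ _ symH irrH (minor_in_contracted bfs_F).
have [_ [col [_ col_proper]]] := degenerate_orient_colouring D_gt0 symH irrH degH.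
have orient a : {o : rel T | orientation D (bip_vertices F col a) (bip_edge e F col a) o}.
  have symK := @bip_edge_sym _ e F _ col a.
  have irrK := @bip_edge_irr _ e F _ col a.
  have degK : degenerate (bip_vertices F col a) (bip_edge e F col a) D.
    by apply: degenerate_minor_free => //; exact: minor_in_bip.
  by have [o [_ [? _]]] := degenerate_orient_colouring D_gt0 symK irrK degK; exists o.
pose o a := sval (orient a).
have o_orientation a := svalP (orient a) : orientation D _ _ (o a).
exists (expansion e F col o); split; last exact: size_expansion.
exact: expansion_root_expansion.
Qed.

Theorem lemma2p2 :
  forall r : nat, exists c : nat,
    forall (T : finType) (e : rel T),
      symmetric e -> irreflexive e -> ~ has_K_minor e r ->
      forall F : seq (rtree T), is_bfs_forest e F ->
        exists FF : seq (seq (rtree T)),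
          root_expansion_forest e F FF /\ size FF <= c.
Proof.
case=> [|r]; first by exists 0 => T e _ _ noK; exfalso; apply: noK; exists (fun _ => set0); split; case.
exists (1 + 2 * (2 ^ r.+1 * 2 ^ r.+1)) => T e sym_e _ noK F bfs_F.
have [FF [expFF sizeFF]] := root_expansion_minor_free sym_e noK bfs_F.
by exists FF; rewrite sizeFF.
Qed.
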